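(* For real $\theta$ such that no lower parameter below is a nonpositive integer, near $x=0$, $${}_3F_2\!\left[\begin{matrix}-\tfrac16+\tfrac{\sqrt3}3\sin\theta,\ \tfrac16+\tfrac{\sqrt3}3\sin\theta,\ \tfrac12+\tfrac{\sqrt3}3\sin\theta\\ 1+\sin(\theta+\tfrac\pi6),\ 1+\sin(\theta-\tfrac\pi6)\end{matrix}\,\Big|\,-\frac{27x}{(1-4x)^3}\right]$$ $$=(1-4x)^{-\frac12+\sqrt3\sin\theta}\;{}_4F_3\!\left[\begin{matrix}-\tfrac12+\sqrt3\sin\theta,\ -\tfrac12-\cos\theta,\ -\tfrac12+\cos\theta,\ \tfrac32+\tfrac{\sqrt3}3\sin\theta\\ 1+\sin(\theta+\tfrac\pi6),\ 1+\sin(\theta-\tfrac\pi6),\ -\tfrac12+\tfrac{\sqrt3}3\sin\theta\end{matrix}\,\Big|\,x\right].$$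
   Context: ${}_pF_q$ denotes the generalized hypergeometric series $\sum_n\frac{\prod(a_i)_n}{n!\prod(b_i)_n}x^n$, with $(c)_n$ the Pochhammer symbol. *)

From Stdlib Require Import Reals List Factorial.
Import ListNotations.
Open Scope R_scope.

Fixpoint poch (c : R) (n : nat) : R :=
  match n with
  | O => 1
  | S m => poch c m * (c + INR m)
  end.

Definition poch_prod (cs : list R) (n : nat) : R :=
  fold_right (fun c acc => poch c n * acc) 1 cs.

Definition hyp_term (as_ bs : list R) (x : R) (n : nat) : R :=
  poch_prod as_ n / (INR (fact n) * poch_prod bs n) * x ^ n.

Definition hyp_sum (as_ bs : list R) (x l : R) : Prop :=
  infinite_sum (hyp_term as_ bs x) l.

Definition nonpos_int (c : R) : Prop := exists n : nat, c = - INR n.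

(* Put t = sin(theta) / sqrt 3 and c = 3 t - 1/2, so that the parameters become
   a_i = (c + i) / 3, b_1,2 = 1 + 3t/2 +- cos(theta)/2, and cos^2 = 1 - 3 t^2 makes
   (b_1 + x)(b_2 + x) a polynomial in t and x alone.  Writing the 3F2 argument as
   -27x / (1-4x)^3, its n-th term carries (1-4x)^-(c+3n); expanding by the binomial
   series and summing the (absolutely convergent, for small x) double series along
   antidiagonals gives, via Gauss's triplication formula, the coefficient
   sum_n (-1)^n (c)_(m+2n) 4^(m-n) / (n! (m-n)! (b_1)_n (b_2)_n)  of x^m.
   Zeilberger's algorithm produces a first-order recurrence in m for this sum,
   verified through an explicit rational certificate; it is the recurrence of
   the 4F3 coefficients, and both start at 1. *)

From Coquelicot Require Import Coquelicot.
From Stdlib Require Import Reals List Lra Lia Factorial.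
Import ListNotations.
Open Scope R_scope.

(** * Pochhammer symbols *)

Lemma INR_fact_neq_0 n : INR (fact n) <> 0.
Proof. apply not_0_INR, fact_neq_0. Qed.

Lemma INR_fact_gt_0 n : 0 < INR (fact n).
Proof. apply lt_0_INR, lt_O_fact. Qed.

Lemma poch_neq_0 c n : (forall k : nat, c + INR k <> 0) -> poch c n <> 0.
Proof.
  intros H; induction n as [|n IH]; simpl; [lra|].
  apply Rmult_integral_contrapositive; auto.
Qed.

Lemma poch_gt_0 c n : 0 < c -> 0 < poch c n.
Proof.
  intros Hc; induction n as [|n IH]; simpl; [lra|].
  pose proof (pos_INR n); apply Rmult_lt_0_compat; lra.
Qed.

Lemma poch_plus c p k : poch c (p + k) = poch c p * poch (c + INR p) k.
Proof.
  induction k as [|k IH].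
  - rewrite Nat.add_0_r; simpl; ring.
  - rewrite Nat.add_succ_r; simpl; rewrite IH, plus_INR; ring.
Qed.

Lemma Rabs_poch_le a b n :
  (forall k : nat, Rabs (a + INR k) <= b + INR k) -> Rabs (poch a n) <= poch b n.
Proof.
  intros H; induction n as [|n IH]; simpl.
  - rewrite Rabs_R1; lra.
  - rewrite Rabs_mult; apply Rmult_le_compat; auto using Rabs_pos.
Qed.

Lemma poch_mult3 c n :
  27 ^ n * (poch (c / 3) n * poch ((c + 1) / 3) n * poch ((c + 2) / 3) n) = poch c (3 * n).
Proof.
  induction n as [|n IH]; [simpl; ring|].
  replace (3 * S n)%nat with (S (S (S (3 * n)))) by lia.
  cbn [poch]; rewrite <- IH, !S_INR, mult_INR; simpl (INR 3); simpl pow; field.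
Qed.
(** * Dominated double series *)

Lemma infinite_sum_ext (f g : nat -> R) l :
  (forall n, f n = g n) -> infinite_sum f l -> infinite_sum g l.
Proof.
  intros H Hf e He; destruct (Hf e He) as [N HN]; exists N; intros n Hn.
  rewrite <- (sum_eq f g n) by auto; auto.
Qed.

Lemma infinite_sum_scal_l (f : nat -> R) k l :
  infinite_sum f l -> infinite_sum (fun n => k * f n) (k * l).
Proof.
  rewrite <- !is_series_Reals; apply (@is_series_scal_l R_AbsRing R_NormedModule).
Qed.

Lemma ex_infinite_sum_le (f g : nat -> R) G :
  (forall n, Rabs (f n) <= g n) -> infinite_sum g G -> exists F, infinite_sum f F.
Proof.
  intros H Hg.
  assert (Hf : ex_series f).
  { apply (@ex_series_le R_AbsRing R_CompleteNormedModule) with g; [exact H|].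
    exists G; apply is_series_Reals; auto. }
  destruct Hf as [F HF]; exists F; apply is_series_Reals; auto.
Qed.

Lemma Rabs_sum_diff_le (f g : nat -> R) k d : (forall j, Rabs (f j) <= g j) ->
  Rabs (sum_f_R0 f (k + d) - sum_f_R0 f k) <= sum_f_R0 g (k + d) - sum_f_R0 g k.
Proof.
  intros H; induction d as [|d IH].
  - rewrite Nat.add_0_r; unfold Rminus; rewrite !Rplus_opp_r, Rabs_R0; lra.
  - replace (k + S d)%nat with (S (k + d)) by lia; simpl.
    pose proof (H (S (k + d))).
    replace (sum_f_R0 f (k + d) + f (S (k + d)) - sum_f_R0 f k)
      with ((sum_f_R0 f (k + d) - sum_f_R0 f k) + f (S (k + d))) by ring.
    eapply Rle_trans; [apply Rabs_triang|lra].
Qed.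

Lemma Rabs_tail_le (f g : nat -> R) a u : (forall j, Rabs (f j) <= g j) ->
  infinite_sum f a -> infinite_sum g u ->
  forall k, Rabs (a - sum_f_R0 f k) <= u - sum_f_R0 g k.
Proof.
  intros H Hf Hg k; apply Rle_plus_epsilon; intros e He.
  destruct (Hf (e / 2)) as [N1 HN1]; [lra|].
  destruct (Hg (e / 2)) as [N2 HN2]; [lra|].
  specialize (HN1 (k + (N1 + N2))%nat ltac:(lia)).
  specialize (HN2 (k + (N1 + N2))%nat ltac:(lia)).
  unfold Rdist in *; rewrite Rabs_minus_sym in HN1; apply Rabs_def2 in HN2.
  pose proof (Rabs_sum_diff_le f g k (N1 + N2) H) as Hd.
  set (S := sum_f_R0 f (k + (N1 + N2))) in *.
  replace (a - sum_f_R0 f k) with ((a - S) + (S - sum_f_R0 f k)) by ring.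
  eapply Rle_trans; [apply Rabs_triang|lra].
Qed.

Lemma Rabs_infinite_sum_le (f g : nat -> R) a u : (forall j, Rabs (f j) <= g j) ->
  infinite_sum f a -> infinite_sum g u -> Rabs a <= u.
Proof.
  intros H Hf Hg; pose proof (Rabs_tail_le f g a u H Hf Hg O) as Ht; simpl in Ht.
  pose proof (H O); replace a with ((a - f O) + f O) by ring.
  eapply Rle_trans; [apply Rabs_triang|lra].
Qed.

Lemma sum_antidiagonal (T : nat -> nat -> R) M :
  sum_f_R0 (fun m => sum_f_R0 (fun n => T n (m - n)%nat) m) M =
  sum_f_R0 (fun n => sum_f_R0 (T n) (M - n)) M.
Proof.
  induction M as [|M IH]; [reflexivity|].
  cbn [sum_f_R0]; rewrite IH, Nat.sub_diag.
  rewrite (sum_eq (fun n => sum_f_R0 (T n) (S M - n))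
             (fun n => sum_f_R0 (T n) (M - n) + T n (S M - n)%nat)).
  2: { intros i Hi; replace (S M - i)%nat with (S (M - i)) by lia; reflexivity. }
  rewrite sum_plus; cbn [sum_f_R0]; ring.
Qed.

Lemma eventually_forall_le (P : nat -> nat -> Prop) N :
  (forall n, (n <= N)%nat -> exists K, forall k, (k >= K)%nat -> P n k) ->
  exists K, forall n k, (n <= N)%nat -> (k >= K)%nat -> P n k.
Proof.
  induction N as [|N IH]; intros H.
  - destruct (H O (le_n O)) as [K HK]; exists K; intros n k Hn Hk.
    replace n with O by lia; auto.
  - destruct IH as [K1 HK1]; [intros n Hn; apply H; lia|].
    destruct (H (S N) (le_n _)) as [K2 HK2]; exists (K1 + K2)%nat.
    intros n k Hn Hk; destruct (Nat.eq_dec n (S N)) as [->|]; [apply HK2|apply HK1]; lia.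
Qed.

Lemma infinite_sum_antidiagonal (T U : nat -> nat -> R) (a u : nat -> R) Su L :
  (forall n j, Rabs (T n j) <= U n j) ->
  (forall n, infinite_sum (T n) (a n)) -> (forall n, infinite_sum (U n) (u n)) ->
  infinite_sum u Su -> infinite_sum a L ->
  infinite_sum (fun m => sum_f_R0 (fun n => T n (m - n)%nat) m) L.
Proof.
  intros HTU Ha Hu HSu HL e He.
  set (rho := fun n k => u n - sum_f_R0 (U n) k).
  assert (Hrho : forall n k, Rabs (a n - sum_f_R0 (T n) k) <= rho n k)
    by (intros n k; apply Rabs_tail_le with (g := U n); auto).
  assert (Hrho_u : forall n k, rho n k <= u n).
  { intros n k; unfold rho.
    enough (0 <= sum_f_R0 (U n) k) by lra.
    apply cond_pos_sum; intro j; pose proof (HTU n j); pose proof (Rabs_pos (T n j)); lra. }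
  destruct (HSu (e / 4)) as [N1 HN1]; [lra|].
  destruct (HL (e / 4)) as [N2 HN2]; [lra|].
  set (d := e / (4 * (INR N1 + 1))).
  assert (Hd : 0 < d) by (pose proof (pos_INR N1); apply Rdiv_lt_0_compat; lra).
  destruct (eventually_forall_le (fun n k => rho n k < d) N1) as [K HK].
  { intros n _; destruct (Hu n d Hd) as [K HK]; exists K; intros k Hk.
    specialize (HK k Hk); unfold Rdist in HK; apply Rabs_def2 in HK; unfold rho; lra. }
  exists (N2 + N1 + K + 1)%nat; intros M HM; unfold Rdist.
  rewrite sum_antidiagonal.
  set (E := sum_f_R0 (fun n => a n - sum_f_R0 (T n) (M - n)) M).
  (* the first N1 tails are small by choice of K, the others by the tail of [u] *)
  assert (HE : Rabs E < e / 4 + e / 2).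
  { eapply Rle_lt_trans; [apply Rsum_abs|].
    eapply Rle_lt_trans; [apply sum_Rle with (Bn := fun n => rho n (M - n)%nat); auto|].
    rewrite (tech2 _ N1 M) by lia; apply Rplus_le_lt_compat.
    - apply Rle_trans with (sum_f_R0 (fun _ => d) N1).
      { apply sum_Rle; intros n Hn; left; apply HK; lia. }
      rewrite sum_cte, S_INR; right; unfold d; field; pose proof (pos_INR N1); lra.
    - apply Rle_lt_trans with (sum_f_R0 (fun i => u (S N1 + i)%nat) (M - S N1)).
      { apply sum_Rle; intros; apply Hrho_u. }
      pose proof (tech2 u N1 M ltac:(lia)).
      pose proof (HN1 M ltac:(lia)) as H1; pose proof (HN1 N1 ltac:(lia)) as H2.
      unfold Rdist in *; apply Rabs_def2 in H1; apply Rabs_def2 in H2; lra. }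
  pose proof (HN2 M ltac:(lia)) as H3; unfold Rdist in H3.
  replace (sum_f_R0 (fun n => sum_f_R0 (T n) (M - n)) M - L)
    with ((sum_f_R0 a M - L) - E) by (unfold E; rewrite minus_sum; ring).
  eapply Rle_lt_trans; [apply Rabs_triang|]; rewrite Rabs_Ropp; lra.
Qed.

(** * The binomial series *)

Definition binom_coef (a : R) (n : nat) : R := poch a n / INR (fact n).

Lemma binom_coef_S a n : binom_coef a (S n) = binom_coef a n * (a + INR n) / (INR n + 1).
Proof.
  unfold binom_coef; cbn [poch]; change (fact (S n)) with (S n * fact n)%nat.
  rewrite mult_INR, S_INR; pose proof (INR_fact_gt_0 n); pose proof (pos_INR n).
  field; lra.
Qed.

Lemma binom_coef_gt_0 a n : 0 < a -> 0 < binom_coef a n.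
Proof. intros; apply Rdiv_lt_0_compat; [apply poch_gt_0|apply INR_fact_gt_0]; auto. Qed.

Lemma Rabs_binom_coef_le a b n :
  (forall k : nat, Rabs (a + INR k) <= b + INR k) -> Rabs (binom_coef a n) <= binom_coef b n.
Proof.
  intros H; unfold binom_coef, Rdiv.
  pose proof (Rinv_0_lt_compat _ (INR_fact_gt_0 n)).
  rewrite Rabs_mult, (Rabs_right (/ _)) by lra.
  apply Rmult_le_compat_r; [lra|]; apply Rabs_poch_le; auto.
Qed.

Lemma Rabs_binom_coef_le_abs a n : Rabs (binom_coef a n) <= binom_coef (Rabs a + 1) n.
Proof.
  apply Rabs_binom_coef_le; intro k; pose proof (pos_INR k).
  pose proof (Rabs_triang a (INR k)); rewrite (Rabs_right (INR k)) in * by lra; lra.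
Qed.

Lemma CV_radius_binom_coef_pos a : 0 < a -> CV_radius (binom_coef a) = 1.
Proof.
  intros Ha; rewrite <- Rinv_1.
  apply CV_radius_finite_DAlembert; [intro n; apply Rgt_not_eq, binom_coef_gt_0; auto|lra|].
  apply is_lim_seq_ext with (fun n => 1 + (a - 1) * / INR (S n)).
  { intro n; rewrite binom_coef_S, S_INR; pose proof (binom_coef_gt_0 a n Ha); pose proof (pos_INR n).
    replace (binom_coef a n * (a + INR n) / (INR n + 1) / binom_coef a n)
      with ((a + INR n) / (INR n + 1)) by (field; lra).
    rewrite Rabs_right; [field; lra|apply Rle_ge, Rdiv_le_0_compat; lra]. }
  assert (H0 : is_lim_seq (fun n => / INR (S n)) 0).
  { apply (is_lim_seq_incr_1 (fun n => / INR n)).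
    replace (Finite 0) with (Rbar_inv p_infty) by reflexivity.
    apply is_lim_seq_inv; [apply is_lim_seq_INR|discriminate]. }
  pose proof (is_lim_seq_scal_l _ (a - 1) _ H0) as H1; simpl in H1.
  replace 1 with (1 + (a - 1) * 0) at 1 by ring.
  apply is_lim_seq_plus'; [apply is_lim_seq_const|exact H1].
Qed.

Lemma CV_radius_binom_coef a v : Rabs v < 1 -> Rbar_lt (Rabs v) (CV_radius (binom_coef a)).
Proof.
  intros Hv.
  enough (H1 : Rbar_le 1 (CV_radius (binom_coef a)))
    by (destruct (CV_radius (binom_coef a)); simpl in *; auto; lra).
  set (b := Rabs a + 1); assert (Hb : 0 < b) by (pose proof (Rabs_pos a); unfold b; lra).
  pose proof (CV_radius_ge_0 (binom_coef a)) as H0.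
  destruct (CV_radius (binom_coef a)) as [r| |] eqn:E; simpl in *; auto.
  destruct (Rle_lt_dec 1 r) as [h|h]; auto; exfalso.
  (* the dominating series, of radius 1, converges at a point beyond r *)
  set (x := (r + 1) / 2).
  assert (Hx : Rabs x = x) by (apply Rabs_right; unfold x; lra).
  apply (CV_disk_outside (binom_coef a) x); [rewrite E, Hx; simpl; unfold x; lra|].
  apply ex_series_lim_0.
  apply (@ex_series_le R_AbsRing R_CompleteNormedModule)
    with (fun n => Rabs (binom_coef b n * x ^ n)).
  - intro n; change norm with Rabs; simpl; rewrite !Rabs_mult.
    apply Rmult_le_compat_r; [apply Rabs_pos|].
    rewrite (Rabs_right (binom_coef b n)) by (apply Rle_ge, Rlt_le, binom_coef_gt_0; auto).
    apply Rabs_binom_coef_le_abs.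
  - apply CV_disk_inside; rewrite CV_radius_binom_coef_pos, Hx by auto; simpl; unfold x; lra.
Qed.

Lemma PS_derive_binom_coef a n : PS_derive (binom_coef a) n = binom_coef a n * (a + INR n).
Proof. unfold PS_derive; rewrite binom_coef_S, S_INR; pose proof (pos_INR n); field; lra. Qed.

Lemma binomial_ode a v : Rabs v < 1 ->
  (1 - v) * PSeries (PS_derive (binom_coef a)) v = a * PSeries (binom_coef a) v.
Proof.
  intros Hv; pose proof (CV_radius_binom_coef a v Hv) as Hin.
  set (D := PSeries (PS_derive (binom_coef a)) v).
  assert (H1 : is_pseries (PS_derive (binom_coef a)) v D)
    by (apply PSeries_correct, ex_pseries_derive; auto).
  assert (H2 : is_pseries (PS_incr_1 (PS_derive (binom_coef a))) v (scal v D))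
    by (apply (@is_pseries_incr_1 R_AbsRing R_NormedModule); auto).
  assert (H3 : is_pseries (PS_scal a (binom_coef a)) v (D - v * D)).
  { eapply (@is_pseries_ext R_AbsRing R_NormedModule);
      [|exact (@is_pseries_minus R_AbsRing R_NormedModule _ _ _ _ _ H1 H2)].
    intro n; unfold PS_minus, PS_scal, PS_incr_1; rewrite PS_derive_binom_coef.
    change (plus ?x (opp ?y)) with (x - y); change (scal ?x ?y) with (x * y).
    match goal with |- ?x = ?y => change (@eq R x y) end.
    destruct n as [|n].
    - change zero with 0; simpl; ring.
    - rewrite PS_derive_binom_coef, binom_coef_S, S_INR; pose proof (pos_INR n); field; lra. }
  apply is_pseries_unique in H3; rewrite PSeries_scal in H3.
  change (scal a ?y) with (a * y) in H3; rewrite H3; unfold D; ring.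
Qed.

Lemma is_derive_Rpower_one_minus a v : v < 1 ->
  is_derive (fun y => Rpower (1 - y) a) v (- a * Rpower (1 - v) a / (1 - v)).
Proof.
  intros Hv; unfold Rpower; auto_derive; [lra|].
  replace (1 + - v) with (1 - v) by ring; field; lra.
Qed.

(* The product of the series with (1 - v)^a has zero derivative on (-1, 1). *)
Lemma binomial_series a v : Rabs v < 1 ->
  infinite_sum (fun j => binom_coef a j * v ^ j) (Rpower (1 - v) (- a)).
Proof.
  intros Hv.
  set (f := PSeries (binom_coef a)).
  set (g := fun y => f y * Rpower (1 - y) a).
  assert (Hd : forall y, Rabs y < 1 -> is_derive g y 0).
  { intros y Hy; assert (Hy1 : y < 1) by (apply Rabs_def2 in Hy; lra).
    pose proof (is_derive_mult _ _ _ _ _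
      (is_derive_PSeries (binom_coef a) y (CV_radius_binom_coef a y Hy))
      (is_derive_Rpower_one_minus a y Hy1) Rmult_comm) as H.
    change (plus ?x ?z) with (x + z) in H; change (mult ?x ?z) with (x * z) in H.
    replace 0 with (PSeries (PS_derive (binom_coef a)) y * Rpower (1 - y) a
                    + PSeries (binom_coef a) y * (- a * Rpower (1 - y) a / (1 - y))); [exact H|].
    replace (PSeries (binom_coef a) y * (- a * Rpower (1 - y) a / (1 - y)))
      with (- (a * PSeries (binom_coef a) y) * Rpower (1 - y) a / (1 - y)) by (field; lra).
    rewrite <- (binomial_ode a y Hy); field; lra. }
  assert (Hrng : forall y, Rmin 0 v <= y <= Rmax 0 v -> Rabs y < 1).
  { intros y [Hy1 Hy2]; apply Rabs_def2 in Hv; unfold Rmin, Rmax in *.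
    destruct (Rle_dec 0 v); apply Rabs_def1; lra. }
  destruct (MVT_gen g 0 v (fun _ => 0)) as [c [_ Hc]].
  { intros y Hy; apply Hd, Hrng; lra. }
  { intros y Hy; apply continuity_pt_filterlim, (@ex_derive_continuous R_AbsRing R_NormedModule).
    exists 0; apply Hd, Hrng; auto. }
  rewrite Rmult_0_l in Hc.
  assert (Hg0 : g 0 = 1).
  { unfold g, f; rewrite PSeries_0; unfold binom_coef, Rpower; simpl.
    replace (1 - 0) with 1 by ring; rewrite ln_1, Rmult_0_r, exp_0; field. }
  assert (Hfv : f v = Rpower (1 - v) (- a)).
  { assert (Hp : 0 < Rpower (1 - v) a) by apply exp_pos.
    rewrite Rpower_Ropp; apply Rmult_eq_reg_r with (Rpower (1 - v) a); [|lra].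
    unfold g in Hc, Hg0; rewrite Rinv_l; lra. }
  rewrite <- Hfv; apply is_series_Reals.
  eapply (@is_series_ext R_AbsRing R_NormedModule);
    [|apply (PSeries_correct (binom_coef a) v), CV_radius_inside, CV_radius_binom_coef; auto].
  intro n; simpl; rewrite pow_n_pow; change (scal (v ^ n) ?y) with (v ^ n * y); ring.
Qed.

Lemma Rpower_opp_plus_mult p a (k n : nat) : 0 < p ->
  Rpower p (- (a + INR k * INR n)) = Rpower p (- a) * / (p ^ k) ^ n.
Proof.
  intros Hp; rewrite <- mult_INR, <- pow_mult, <- Rpower_pow, <- Rpower_Ropp by auto.
  rewrite <- Rpower_plus; f_equal; ring.
Qed.

Lemma series_binomial_expansion (A : nat -> R) (c y w K rho : R) (k : nat) :
  (forall n, Rabs (A n) <= K * rho ^ n) -> 0 <= rho -> Rabs w < 1 ->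
  rho * Rabs y < (1 - Rabs w) ^ k ->
  exists L,
    infinite_sum (fun n => A n * y ^ n * Rpower (1 - w) (- (c + INR k * INR n))) L /\
    infinite_sum (fun m => sum_f_R0 (fun n =>
      A n * y ^ n * (binom_coef (c + INR k * INR n) (m - n) * w ^ (m - n))) m) L.
Proof.
  intros HA Hrho Hw Hy.
  assert (Hw' : Rabs (Rabs w) < 1) by (rewrite Rabs_Rabsolu; auto).
  set (p := 1 - Rabs w); assert (Hp : 0 < p) by (unfold p; lra).
  assert (Hpk : 0 < p ^ k) by (apply pow_lt; auto).
  set (T := fun n j => A n * y ^ n * (binom_coef (c + INR k * INR n) j * w ^ j)).
  set (U := fun n j => Rabs (A n) * Rabs y ^ n
                       * (binom_coef (Rabs c + INR k * INR n) j * Rabs w ^ j)).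
  set (a := fun n => A n * y ^ n * Rpower (1 - w) (- (c + INR k * INR n))).
  set (u := fun n => Rabs (A n) * Rabs y ^ n * Rpower p (- (Rabs c + INR k * INR n))).
  assert (HTa : forall n, infinite_sum (T n) (a n))
    by (intro n; apply infinite_sum_scal_l, binomial_series; auto).
  assert (HUu : forall n, infinite_sum (U n) (u n))
    by (intro n; apply infinite_sum_scal_l, binomial_series; auto).
  assert (HTU : forall n j, Rabs (T n j) <= U n j).
  { intros n j; unfold T, U; rewrite !Rabs_mult, <- !RPow_abs.
    apply Rmult_le_compat_l; [apply Rmult_le_pos; [apply Rabs_pos|apply pow_le, Rabs_pos]|].
    apply Rmult_le_compat_r; [apply pow_le, Rabs_pos|].
    apply Rabs_binom_coef_le; intro i.
    pose proof (pos_INR k); pose proof (pos_INR n); pose proof (pos_INR i).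
    pose proof (Rabs_triang (c + INR k * INR n) (INR i)).
    pose proof (Rabs_triang c (INR k * INR n)).
    rewrite (Rabs_right (INR i)), (Rabs_right (INR k * INR n)) in * by nra; lra. }
  set (r := rho * Rabs y / p ^ k).
  assert (Hr : Rabs r < 1).
  { unfold r; pose proof (Rabs_pos y).
    rewrite Rabs_right by (apply Rle_ge, Rdiv_le_0_compat; [apply Rmult_le_pos|]; lra).
    apply Rlt_div_l; [lra|rewrite Rmult_1_l; exact Hy]. }
  set (g := fun n => Rpower p (- Rabs c) * K * r ^ n).
  assert (Hg : infinite_sum g (Rpower p (- Rabs c) * K * / (1 - r)))
    by (apply infinite_sum_scal_l, is_series_Reals, is_series_geom; auto).
  assert (Hug : forall n, Rabs (u n) <= g n).
  { intro n; unfold u, g, r; rewrite Rpower_opp_plus_mult by auto.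
    assert (Hc : 0 < Rpower p (- Rabs c)) by apply exp_pos.
    assert (Hi : 0 < / (p ^ k) ^ n) by (apply Rinv_0_lt_compat, pow_lt; auto).
    pose proof (HA n); pose proof (pow_le (Rabs y) n (Rabs_pos _)).
    rewrite Rabs_right by (apply Rle_ge, Rmult_le_pos;
      [apply Rmult_le_pos; [apply Rabs_pos|auto]|apply Rmult_le_pos; lra]).
    unfold Rdiv; rewrite !Rpow_mult_distr, pow_inv.
    apply Rle_trans with (K * rho ^ n * Rabs y ^ n * (Rpower p (- Rabs c) * / (p ^ k) ^ n));
      [|right; ring].
    apply Rmult_le_compat_r; [nra|apply Rmult_le_compat_r; auto]. }
  destruct (ex_infinite_sum_le u g _ Hug Hg) as [Su HSu].
  assert (Hau : forall n, Rabs (a n) <= u n)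
    by (intro n; apply Rabs_infinite_sum_le with (T n) (U n); auto).
  destruct (ex_infinite_sum_le a u Su Hau HSu) as [L HL].
  exists L; split; [exact HL|].
  exact (infinite_sum_antidiagonal T U a u Su L HTU HTa HUu HSu HL).
Qed.

(** * Growth of the 3F2 coefficients *)

Definition hyp_coef (as_ bs : list R) (n : nat) : R :=
  poch_prod as_ n / (INR (fact n) * poch_prod bs n).

Lemma hyp_coef3_S a1 a2 a3 b1 b2 n :
  (forall k : nat, b1 + INR k <> 0) -> (forall k : nat, b2 + INR k <> 0) ->
  hyp_coef [a1; a2; a3] [b1; b2] (S n) = hyp_coef [a1; a2; a3] [b1; b2] n *
    ((a1 + INR n) * (a2 + INR n) * (a3 + INR n) / ((INR n + 1) * (b1 + INR n) * (b2 + INR n))).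
Proof.
  intros H1 H2; unfold hyp_coef, poch_prod; simpl fold_right.
  change (fact (S n)) with (S n * fact n)%nat; rewrite mult_INR, S_INR; cbn [poch].
  pose proof (INR_fact_neq_0 n); pose proof (poch_neq_0 b1 n H1); pose proof (poch_neq_0 b2 n H2).
  pose proof (H1 n); pose proof (H2 n); pose proof (pos_INR n).
  field; repeat split; auto; lra.
Qed.

(* Consecutive coefficients have ratio at most (m + 2)^3 / ((m + 1) m^2) <= 30 for m >= 1. *)
Lemma hyp_coef3_bound a1 a2 a3 b1 b2 :
  Rabs a1 <= 2 -> Rabs a2 <= 2 -> Rabs a3 <= 2 -> 0 <= b1 -> 0 <= b2 ->
  (forall k : nat, b1 + INR k <> 0) -> (forall k : nat, b2 + INR k <> 0) ->
  exists K, forall n, Rabs (hyp_coef [a1; a2; a3] [b1; b2] n) <= K * 30 ^ n.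
Proof.
  intros ha1 ha2 ha3 hb1 hb2 H1 H2.
  set (A := hyp_coef [a1; a2; a3] [b1; b2]).
  assert (Hstep : forall n, (1 <= n)%nat -> Rabs (A (S n)) <= 30 * Rabs (A n)).
  { intros n Hn; unfold A; rewrite hyp_coef3_S by auto; fold A.
    rewrite Rabs_mult, Rmult_comm; apply Rmult_le_compat_r; [apply Rabs_pos|].
    assert (Hm : 1 <= INR n) by (apply (le_INR 1); lia); set (m := INR n) in *.
    assert (Hd : 0 < (m + 1) * (b1 + m) * (b2 + m))
      by (apply Rmult_lt_0_compat; [apply Rmult_lt_0_compat|]; lra).
    rewrite Rabs_div, (Rabs_right ((m + 1) * (b1 + m) * (b2 + m))) by lra.
    apply Rle_div_l; [lra|]; rewrite !Rabs_mult.
    assert (Ha : forall a, Rabs a <= 2 -> Rabs (a + m) <= m + 2)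
      by (intros a Ha; pose proof (Rabs_triang a m); rewrite (Rabs_right m) in * by lra; lra).
    apply Rle_trans with ((m + 2) * (m + 2) * (m + 2)).
    { apply Rmult_le_compat; auto using Rmult_le_pos, Rabs_pos.
      apply Rmult_le_compat; auto using Rabs_pos. }
    apply Rle_trans with (30 * ((m + 1) * m * m)); [nra|].
    apply Rmult_le_compat_l; [lra|].
    apply Rmult_le_compat; [nra|lra|apply Rmult_le_compat|]; lra. }
  exists (1 + Rabs (A 1%nat)); pose proof (Rabs_pos (A 1%nat)).
  induction n as [|[|n] IH].
  - replace (A O) with 1 by (unfold A, hyp_coef, poch_prod; simpl; field).
    rewrite Rabs_R1; simpl; lra.
  - simpl; lra.
  - eapply Rle_trans; [apply Hstep; lia|].
    change (30 ^ S (S n)) with (30 * 30 ^ S n); nra.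
Qed.

(** * The Zeilberger recurrence *)

(* The coefficient of x^m after expanding the left-hand side: [m - n] comes from the
   binomial series, [n] from the 3F2 (using [poch_mult3] and [poch_plus]). *)
Definition antidiag_term (c b1 b2 : R) (m n : nat) : R :=
  (-1) ^ n * poch c (m + 2 * n) * 4 ^ (m - n) /
  (INR (fact n) * INR (fact (m - n)) * poch b1 n * poch b2 n).

Definition antidiag_term_up (c b1 b2 : R) (m n : nat) : R :=
  (-1) ^ n * poch c (m + 2 * n) * 4 ^ (S m - n) /
  (INR (fact n) * INR (fact (S m - n)) * poch b1 n * poch b2 n).

Section AntidiagTerms.

Variables c b1 b2 : R.
Hypothesis hb1 : forall k : nat, b1 + INR k <> 0.
Hypothesis hb2 : forall k : nat, b2 + INR k <> 0.

Lemma antidiag_term_S m n :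
  antidiag_term c b1 b2 (S m) n = (c + INR m + 2 * INR n) * antidiag_term_up c b1 b2 m n.
Proof.
  unfold antidiag_term, antidiag_term_up.
  change (S m + 2 * n)%nat with (S (m + 2 * n)); cbn [poch].
  rewrite plus_INR, mult_INR; simpl (INR 2); unfold Rdiv; ring.
Qed.

Lemma antidiag_term_up_eq m n : (n <= m)%nat ->
  antidiag_term c b1 b2 m n = INR (S m - n) / 4 * antidiag_term_up c b1 b2 m n.
Proof.
  intros H; unfold antidiag_term, antidiag_term_up.
  replace (S m - n)%nat with (S (m - n)) by lia.
  change (fact (S (m - n))) with (S (m - n) * fact (m - n))%nat; rewrite mult_INR.
  pose proof (INR_fact_neq_0 n); pose proof (INR_fact_neq_0 (m - n)).
  pose proof (poch_neq_0 b1 n hb1); pose proof (poch_neq_0 b2 n hb2).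
  assert (INR (S (m - n)) <> 0) by (apply not_0_INR; lia).
  simpl pow; field; repeat split; auto.
Qed.

Lemma antidiag_term_up_S m n : (n <= m)%nat ->
  antidiag_term_up c b1 b2 m (S n) = antidiag_term_up c b1 b2 m n
    * (-1) * (c + INR m + 2 * INR n) * (c + INR m + 2 * INR n + 1) * INR (S m - n)
    / (4 * (INR n + 1) * (b1 + INR n) * (b2 + INR n)).
Proof.
  intros H; unfold antidiag_term_up.
  replace (m + 2 * S n)%nat with (S (S (m + 2 * n))) by lia.
  replace (S m - S n)%nat with (m - n)%nat by lia.
  replace (S m - n)%nat with (S (m - n)) by lia.
  change (fact (S (m - n))) with (S (m - n) * fact (m - n))%nat.
  change (fact (S n)) with (S n * fact n)%nat; cbn [poch].
  rewrite !mult_INR, !S_INR, plus_INR, mult_INR, minus_INR by lia; simpl (INR 2).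
  pose proof (INR_fact_neq_0 n); pose proof (INR_fact_neq_0 (m - n)).
  pose proof (poch_neq_0 b1 n hb1); pose proof (poch_neq_0 b2 n hb2).
  pose proof (hb1 n); pose proof (hb2 n); pose proof (pos_INR n).
  assert (INR m - INR n + 1 <> 0) by (pose proof (le_INR _ _ H); lra).
  simpl pow; field; repeat split; auto; lra.
Qed.

End AntidiagTerms.

Definition lower_prod (t x : R) : R := x * x + 3 * t * x + 3 * t * t - 1 / 4.

(* Zeilberger certificate: the summand of the recurrence is the difference
   G(m, n + 1) - G(m, n) with G = 2 cert_poly * antidiag_term_up. *)
Definition cert_alpha (t m : R) : R :=
  let M := m + 1 in let u := 3 * t - 1 / 2 + m in
  let e2 := 4 * M - 4 * u - 2 in let e1 := (4 * u + 2) * M - u * (u + 1) in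
  - (e2 + e1 + 4 * (3 * t * t - 1 / 4)) / (2 * M * lower_prod t (m + 1) * (t + m - 1 / 2)).

Definition cert_beta (t m : R) : R := 2 / ((m + 1) * lower_prod t (m + 1) * (t + m - 1 / 2)).

Definition cert_poly (t m n : R) : R := n * lower_prod t n * (cert_alpha t m + cert_beta t m * n).

Definition coef_ratio (t C m : R) : R :=
  (3 * t - 1 / 2 + m) * ((m - 1 / 2) * (m - 1 / 2) - C * C) * (3 / 2 + t + m)
  / ((m + 1) * lower_prod t (m + 1) * (t - 1 / 2 + m)).

Lemma cert_identity (t C m n : R) : C * C = 1 - 3 * t * t ->
  m + 1 <> 0 -> lower_prod t (m + 1) <> 0 -> t - 1 / 2 + m <> 0 ->
  n + 1 <> 0 -> lower_prod t (n + 1) <> 0 ->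
  4 * (3 * t - 1 / 2 + m + 2 * n) - coef_ratio t C m * (m + 1 - n) =
  - 2 * cert_poly t m (n + 1) * (3 * t - 1 / 2 + m + 2 * n) * (3 * t - 1 / 2 + m + 2 * n + 1)
    * (m + 1 - n) / ((n + 1) * lower_prod t (n + 1))
  - 8 * cert_poly t m n.
Proof.
  intros HC H1 H2 H3 H4 H5; unfold coef_ratio, cert_poly, cert_alpha, cert_beta.
  replace ((m - 1 / 2) * (m - 1 / 2) - C * C)
    with ((m - 1 / 2) * (m - 1 / 2) - 1 + 3 * t * t) by (rewrite HC; ring).
  assert (t + m - 1 / 2 <> 0) by lra.
  unfold lower_prod in *; field; repeat split; auto; intro; [apply H1|apply H2|apply H5]; lra.
Qed.

Lemma sum_telescope (g : nat -> R) N : sum_f_R0 (fun n => g (S n) - g n) N = g (S N) - g O.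
Proof. induction N as [|N IH]; simpl; [|rewrite IH]; ring. Qed.

Lemma sum_scal_l (a : nat -> R) k N : sum_f_R0 (fun n => k * a n) N = k * sum_f_R0 a N.
Proof. induction N as [|N IH]; simpl; [|rewrite IH]; ring. Qed.

Section Zeilberger.

Variables t C b1 b2 : R.
Hypothesis HC : C * C = 1 - 3 * t * t.
Hypothesis Hb1 : b1 = 1 + 3 * t / 2 + C / 2.
Hypothesis Hb2 : b2 = 1 + 3 * t / 2 - C / 2.
Hypothesis hb1 : forall k : nat, b1 + INR k <> 0.
Hypothesis hb2 : forall k : nat, b2 + INR k <> 0.
Hypothesis hb3 : forall k : nat, t - 1 / 2 + INR k <> 0.

Let c := 3 * t - 1 / 2.
Let rhs_coef := hyp_coef [c; -1/2 - C; -1/2 + C; 3/2 + t] [b1; b2; t - 1/2].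
Let certificate (m n : nat) : R := 2 * cert_poly t (INR m) (INR n) * antidiag_term_up c b1 b2 m n.

Lemma lower_prod_eq x : (b1 + x) * (b2 + x) = lower_prod t (x + 1).
Proof.
  unfold lower_prod; rewrite Hb1, Hb2.
  apply Rminus_diag_uniq; replace ((1 + 3 * t / 2 + C / 2 + x) * (1 + 3 * t / 2 - C / 2 + x)
    - ((x + 1) * (x + 1) + 3 * t * (x + 1) + 3 * t * t - 1 / 4)) with ((1 - 3 * t * t - C * C) / 4)
    by field.
  rewrite HC; field.
Qed.

Lemma lower_prod_neq_0 (k : nat) : lower_prod t (INR k + 1) <> 0.
Proof. rewrite <- lower_prod_eq; apply Rmult_integral_contrapositive; auto. Qed.

Lemma rhs_coef_S m : rhs_coef (S m) = coef_ratio t C (INR m) * rhs_coef m.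
Proof.
  unfold rhs_coef, hyp_coef, poch_prod, coef_ratio; simpl fold_right; cbn [poch].
  change (fact (S m)) with (S m * fact m)%nat; rewrite mult_INR, S_INR, <- lower_prod_eq.
  pose proof (INR_fact_neq_0 m); pose proof (poch_neq_0 b1 m hb1); pose proof (poch_neq_0 b2 m hb2).
  pose proof (poch_neq_0 _ m hb3); pose proof (hb1 m); pose proof (hb2 m); pose proof (hb3 m).
  pose proof (pos_INR m).
  unfold c; field; repeat split; auto; lra.
Qed.

Lemma antidiag_term_recurrence m n : (n <= m)%nat ->
  antidiag_term c b1 b2 (S m) n - coef_ratio t C (INR m) * antidiag_term c b1 b2 m n
    = certificate m (S n) - certificate m n.
Proof.
  intros Hn; unfold certificate.
  rewrite antidiag_term_S, antidiag_term_up_eq, antidiag_term_up_S, minus_INR, !S_INR by auto.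
  assert (Hm1 : INR m + 1 <> 0) by (pose proof (pos_INR m); lra).
  assert (Hn1 : INR n + 1 <> 0) by (pose proof (pos_INR n); lra).
  pose proof (cert_identity t C (INR m) (INR n) HC Hm1 (lower_prod_neq_0 m) (hb3 m) Hn1
                (lower_prod_neq_0 n)) as Hcert.
  rewrite Rmult_assoc with (r1 := 4 * (INR n + 1)), lower_prod_eq.
  set (K := antidiag_term_up c b1 b2 m n).
  transitivity (K * ((4 * (c + INR m + 2 * INR n) - coef_ratio t C (INR m) * (INR m + 1 - INR n)) / 4));
    [unfold c; field|].
  unfold c; rewrite Hcert; field; split; auto using lower_prod_neq_0.
Qed.

Lemma antidiag_term_diag m : antidiag_term c b1 b2 (S m) (S m) = - certificate m (S m).
Proof.
  unfold certificate; rewrite antidiag_term_S.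
  assert (Hm1 : INR m + 1 <> 0) by (pose proof (pos_INR m); lra).
  assert (Hn1 : INR (S m) + 1 <> 0) by (pose proof (pos_INR (S m)); lra).
  pose proof (cert_identity t C (INR m) (INR (S m)) HC Hm1 (lower_prod_neq_0 m) (hb3 m) Hn1
                (lower_prod_neq_0 (S m))) as Hcert.
  rewrite S_INR in *; replace (INR m + 1 - (INR m + 1)) with 0 in Hcert by ring.
  rewrite !Rmult_0_r in Hcert; unfold Rdiv in Hcert; rewrite Rmult_0_l, Rminus_0_r in Hcert.
  replace (c + INR m + 2 * (INR m + 1)) with (-2 * cert_poly t (INR m) (INR m + 1))
    by (unfold c; lra).
  ring.
Qed.

Lemma sum_antidiag_term m : sum_f_R0 (antidiag_term c b1 b2 m) m = rhs_coef m.
Proof.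
  induction m as [|m IH].
  - unfold antidiag_term, rhs_coef, hyp_coef, poch_prod; simpl; field.
  - cbn [sum_f_R0]; rewrite antidiag_term_diag.
    rewrite (sum_eq _ (fun n => coef_ratio t C (INR m) * antidiag_term c b1 b2 m n
                              + (certificate m (S n) - certificate m n)))
      by (intros i Hi; pose proof (antidiag_term_recurrence m i Hi); lra).
    rewrite sum_plus, sum_telescope, sum_scal_l, IH, rhs_coef_S.
    replace (certificate m 0) with 0 by (unfold certificate, cert_poly; simpl; ring).
    ring.
Qed.

End Zeilberger.

(** * The transformation *)

Lemma not_nonpos_int_plus_INR b : ~ nonpos_int b -> forall k : nat, b + INR k <> 0.
Proof. intros H k Hk; apply H; exists k; lra. Qed.

Lemma hyp_coef_binom_antidiag c b1 b2 x m n : (n <= m)%nat ->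
  (forall k : nat, b1 + INR k <> 0) -> (forall k : nat, b2 + INR k <> 0) ->
  hyp_coef [c / 3; (c + 1) / 3; (c + 2) / 3] [b1; b2] n * (- (27 * x)) ^ n
    * (binom_coef (c + INR 3 * INR n) (m - n) * (4 * x) ^ (m - n))
  = antidiag_term c b1 b2 m n * x ^ m.
Proof.
  intros Hnm hb1 hb2; unfold hyp_coef, binom_coef, antidiag_term, poch_prod; simpl fold_right.
  replace (m + 2 * n)%nat with (3 * n + (m - n))%nat by lia.
  rewrite poch_plus, <- poch_mult3, mult_INR.
  replace (- (27 * x)) with ((-1) * 27 * x) by ring.
  replace (x ^ m) with (x ^ n * x ^ (m - n)) by (rewrite <- pow_add; f_equal; lia).
  rewrite !Rpow_mult_distr.
  pose proof (INR_fact_neq_0 n); pose proof (INR_fact_neq_0 (m - n)).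
  pose proof (poch_neq_0 b1 n hb1); pose proof (poch_neq_0 b2 n hb2).
  field; repeat split; auto.
Qed.

Lemma hyp_term_rescaled c b1 b2 x q n : 0 < q ->
  (forall k : nat, b1 + INR k <> 0) -> (forall k : nat, b2 + INR k <> 0) ->
  hyp_term [c / 3; (c + 1) / 3; (c + 2) / 3] [b1; b2] (- (27 * x) / q ^ 3) n
  = Rpower q c * (hyp_coef [c / 3; (c + 1) / 3; (c + 2) / 3] [b1; b2] n * (- (27 * x)) ^ n
                  * Rpower q (- (c + INR 3 * INR n))).
Proof.
  intros Hq hb1 hb2; unfold hyp_term, hyp_coef.
  rewrite Rpower_opp_plus_mult, Rpower_Ropp by auto; unfold Rdiv.
  rewrite Rpow_mult_distr, pow_inv.
  assert (0 < Rpower q c) by apply exp_pos.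
  assert (0 < (q ^ 3) ^ n) by (apply pow_lt, pow_lt; auto).
  pose proof (INR_fact_neq_0 n); pose proof (poch_neq_0 b1 n hb1); pose proof (poch_neq_0 b2 n hb2).
  unfold poch_prod; simpl fold_right; field; repeat split; auto; lra.
Qed.

Section ThetaParametrization.

Variable theta : R.
Let t := sqrt 3 / 3 * sin theta.

Lemma sqrt3_sin : sqrt 3 * sin theta = 3 * t.
Proof. unfold t; field. Qed.

Lemma cos_sqr_param : cos theta * cos theta = 1 - 3 * t * t.
Proof.
  unfold t; pose proof (sin2_cos2 theta) as H; unfold Rsqr in H.
  replace (3 * (sqrt 3 / 3 * sin theta) * (sqrt 3 / 3 * sin theta))
    with (sqrt 3 * sqrt 3 * sin theta * sin theta / 3) by field.
  rewrite sqrt_sqrt by lra; lra.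
Qed.

Lemma sin_plus_PI6_param : 1 + sin (theta + PI / 6) = 1 + 3 * t / 2 + cos theta / 2.
Proof. rewrite sin_plus, sin_PI6, cos_PI6, <- sqrt3_sin; field. Qed.

Lemma sin_minus_PI6_param : 1 + sin (theta - PI / 6) = 1 + 3 * t / 2 - cos theta / 2.
Proof. rewrite sin_minus, sin_PI6, cos_PI6, <- sqrt3_sin; field. Qed.

Lemma Rabs_param_le : Rabs t <= 1.
Proof.
  assert (Hs : sqrt 3 < 3) by (pose proof (sqrt_sqrt 3); pose proof (sqrt_pos 3); nra).
  assert (Hs0 : 0 <= sqrt 3 / 3) by (pose proof (sqrt_pos 3); lra).
  unfold t; rewrite Rabs_mult, (Rabs_right (sqrt 3 / 3)) by lra.
  apply Rle_trans with (sqrt 3 / 3 * 1); [|lra].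
  apply Rmult_le_compat_l; [lra|apply Rabs_le, SIN_bound].
Qed.

End ThetaParametrization.

Lemma small_x_bounds x : Rabs x < 1 / 1000 ->
  Rabs (4 * x) < 1 /\ 30 * Rabs (- (27 * x)) < (1 - Rabs (4 * x)) ^ 3.
Proof.
  intros Hx; rewrite Rabs_Ropp, !Rabs_mult, !(Rabs_right 4), !(Rabs_right 27) by lra.
  pose proof (Rabs_pos x); split; [lra|].
  assert (Hu : 0 <= 4 * Rabs x <= 1) by lra.
  simpl; nra.
Qed.

Theorem mainTheorem13 (theta : R) :
  let s := sin theta in
  let b1 := 1 + sin (theta + PI / 6) in
  let b2 := 1 + sin (theta - PI / 6) in
  let b3 := -1/2 + sqrt 3 / 3 * s in
  ~ nonpos_int b1 -> ~ nonpos_int b2 -> ~ nonpos_int b3 ->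
  exists delta : R, 0 < delta /\
    forall x : R, Rabs x < delta ->
      exists l1 l2 : R,
        hyp_sum [-1/6 + sqrt 3 / 3 * s; 1/6 + sqrt 3 / 3 * s; 1/2 + sqrt 3 / 3 * s]
                [b1; b2]
                (- (27 * x) / (1 - 4 * x) ^ 3) l1 /\
        hyp_sum [-1/2 + sqrt 3 * s; -1/2 - cos theta; -1/2 + cos theta;
                 3/2 + sqrt 3 / 3 * s]
                [b1; b2; b3] x l2 /\
        l1 = Rpower (1 - 4 * x) (-1/2 + sqrt 3 * s) * l2.
Proof.
  intros s b1 b2 b3 Hn1 Hn2 Hn3; subst s b3.
  pose proof (cos_sqr_param theta) as HC; pose proof (Rabs_param_le theta) as Ht.
  pose proof (sin_plus_PI6_param theta) as Hb1; pose proof (sin_minus_PI6_param theta) as Hb2.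
  rewrite sqrt3_sin; set (t := sqrt 3 / 3 * sin theta) in *; set (C := cos theta) in *.
  set (c := 3 * t - 1 / 2).
  replace (-1/6 + t) with (c / 3) by (unfold c; field).
  replace (1/6 + t) with ((c + 1) / 3) by (unfold c; field).
  replace (1/2 + t) with ((c + 2) / 3) by (unfold c; field).
  replace (-1/2 + 3 * t) with c by (unfold c; lra).
  replace (-1/2 + t) with (t - 1/2) in * by lra.
  pose proof (not_nonpos_int_plus_INR _ Hn1) as hb1.
  pose proof (not_nonpos_int_plus_INR _ Hn2) as hb2.
  pose proof (not_nonpos_int_plus_INR _ Hn3) as hb3.
  assert (Hb1p : 0 <= b1) by (pose proof (SIN_bound (theta + PI / 6)); unfold b1; lra).
  assert (Hb2p : 0 <= b2) by (pose proof (SIN_bound (theta - PI / 6)); unfold b2; lra).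
  apply Rabs_le_between in Ht.
  destruct (hyp_coef3_bound (c / 3) ((c + 1) / 3) ((c + 2) / 3) b1 b2) as [K HK];
    try (apply Rabs_le; unfold c; lra); auto.
  exists (1 / 1000); split; [lra|]; intros x Hx.
  destruct (small_x_bounds x Hx) as [Hw Hy].
  destruct (series_binomial_expansion _ c (- (27 * x)) (4 * x) K 30 3 HK ltac:(lra) Hw Hy)
    as [L [HL1 HL2]].
  exists (Rpower (1 - 4 * x) c * L), L; split; [|split; [|reflexivity]].
  - refine (infinite_sum_ext _ _ _ _ (infinite_sum_scal_l _ _ _ HL1)); intro n.
    symmetry; apply hyp_term_rescaled; auto.
    apply Rabs_def2 in Hw; lra.
  - refine (infinite_sum_ext _ _ _ _ HL2); intro m.
    rewrite (sum_eq _ (fun n => antidiag_term c b1 b2 m n * x ^ m))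
      by (intros; apply hyp_coef_binom_antidiag; auto).
    rewrite <- scal_sum; unfold c; rewrite (sum_antidiag_term t C b1 b2 HC Hb1 Hb2 hb1 hb2 hb3).
    unfold hyp_term, hyp_coef; ring.
Qed.
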